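(* Let $E$ be a regular biordered set satisfying: (E1) there exists $0\in E$ with $0\,\omega\,e$ for every $e\in E$; (E2) there is a map $e\mapsto e'$ on $E$ such that for all $e,f\in E$: (i) $(e')'=e$; (ii) $f\,\omega^l\,e$ iff $e'\,\omega^r\,f'$; (iii) $f\,\omega^l\,e'$ iff $M(f,e)=\{0\}$. Then the posets $L(E)=E/\mathcal L$ and $R(E)=E/\mathcal R$ are complemented modular lattices, and they are dually isomorphic.
   Context: A regular biordered set is a partial algebra isomorphic to the set of idempotents $E(S)$ of a regular semigroup $S$ (regular: every $x$ has $y$ with $xyx=x$), where $ef$ (computed in $S$) is defined when $\{ef,fe\}\cap\{e,f\}\ne\emptyset$. In $E$: $\omega^l=\{(e,f): ef=e\}$, $\omega^r=\{(e,f): fe=e\}$, $\omega=\omega^l\cap\omega^r$, $M(e,f)=\{g\in E: g\,\omega^l\,e,\ g\,\omega^r\,f\}$. Let $\mathcal L=\omega^l\cap(\omega^l)^{-1}$ and $\mathcal R=\omega^r\cap(\omega^r)^{-1}$, equivalence relations on $E$ with classes $\mathcal L(e)$, $\mathcal R(e)$. $E/\mathcal L$ is partially ordered by $\mathcal L(e)\le\mathcal L(f)$ iff $e\,\omega^l\,f$, and $E/\mathcal R$ by $\mathcal R(e)\le\mathcal R(f)$ iff $e\,\omega^r\,f$. *)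

(* A regular biordered set is (up to isomorphism) the
   biordered set E(S) of idempotents of a regular semigroup S; we work
   directly with E(S). *)
Set Implicit Arguments.

Section Semigroup.
Variable S : Type.
Variable mul : S -> S -> S.

Definition associative_op : Prop :=
  forall x y z, mul x (mul y z) = mul (mul x y) z.

Definition regular_semigroup : Prop :=
  forall x, exists y, mul (mul x y) x = x.

Definition idem (e : S) : Prop := mul e e = e.

Definition omega_l (e f : S) : Prop := mul e f = e.
Definition omega_r (e f : S) : Prop := mul f e = e.
Definition omega (e f : S) : Prop := omega_l e f /\ omega_r e f.

Definition Mset (e f : S) (g : S) : Prop :=
  idem g /\ omega_l g e /\ omega_r g f.

Definition Lrel (e f : S) : Prop := omega_l e f /\ omega_l f e.
Definition Rrel (e f : S) : Prop := omega_r e f /\ omega_r f e.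

Definition Lcls (e : S) : S -> Prop := fun x => idem x /\ Lrel x e.
Definition Rcls (e : S) : S -> Prop := fun x => idem x /\ Rrel x e.

(* E/L and E/R as types of classes *)
Definition LE : Type := { A : S -> Prop | exists e, idem e /\ A = Lcls e }.
Definition RE : Type := { A : S -> Prop | exists e, idem e /\ A = Rcls e }.

Definition LE_le (A B : LE) : Prop :=
  exists e f, proj1_sig A e /\ proj1_sig B f /\ omega_l e f.
Definition RE_le (A B : RE) : Prop :=
  exists e f, proj1_sig A e /\ proj1_sig B f /\ omega_r e f.

End Semigroup.

Section Order.
Variable T : Type.
Variable le : T -> T -> Prop.

Definition partial_order : Prop :=
  (forall a, le a a) /\
  (forall a b, le a b -> le b a -> a = b) /\
  (forall a b c, le a b -> le b c -> le a c).

Definition is_glb (a b m : T) : Prop :=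
  le m a /\ le m b /\ forall c, le c a -> le c b -> le c m.
Definition is_lub (a b j : T) : Prop :=
  le a j /\ le b j /\ forall c, le a c -> le b c -> le j c.

Definition is_lattice : Prop :=
  partial_order /\
  forall a b, (exists m, is_glb a b m) /\ (exists j, is_lub a b j).

(* modular law: a <= b  ->  (a v x) ^ b = a v (x ^ b) *)
Definition modular : Prop :=
  forall a b x, le a b ->
  forall j m n k, is_lub a x j -> is_glb j b m -> is_glb x b n ->
    is_lub a n k -> m = k.

Definition complemented : Prop :=
  exists bot top, (forall x, le bot x /\ le x top) /\
    forall a, exists c, is_glb a c bot /\ is_lub a c top.

Definition complemented_modular_lattice : Prop :=
  is_lattice /\ modular /\ complemented.

End Order.

Definition dually_isomorphic (T1 T2 : Type) (le1 : T1 -> T1 -> Prop)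
  (le2 : T2 -> T2 -> Prop) : Prop :=
  exists (f : T1 -> T2) (g : T2 -> T1),
    (forall x, g (f x) = x) /\ (forall y, f (g y) = y) /\
    (forall a b, le1 a b <-> le2 (f b) (f a)).

(* Write e <= f for e omega^l f, so that L(E) is E ordered by <= up to L.
   Regularity and (E2)(iii) give M(e,f) = {0} iff ef = 0, hence e <= f iff e f' = 0; more
   generally every s in S with s f' = 0 lies in Sf.  With this, the meet of e and f is an
   idempotent L-related to u' f, where u is an idempotent R-related to f e', and the join j of
   a and x is characterised by: c <= j iff c a' lies in S x a'.  The latter gives modularity:
   if a <= b, c <= b and c a' = r x a', then t = r x satisfies t b' = c b' = 0, so t lies in
   Sx and in Sb, hence in S(x /\ b).  L(e') is a complement of L(e), between L(0) and L(0').
   The axioms are self-dual and R(E) is literally L(E) of the opposite semigroup, so R(E) is a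
   complemented modular lattice as well; x |-> x' maps L-classes onto R-classes reversing order. *)

From Stdlib Require Import ProofIrrelevance FunctionalExtensionality PropExtensionality.

Set Implicit Arguments.
Unset Strict Implicit.

Section OrderFacts.
Variables (T : Type) (le : T -> T -> Prop).
Hypothesis le_po : partial_order le.

Lemma lub_unique a b j j' : is_lub le a b j -> is_lub le a b j' -> j = j'.
Proof.
  intros [Haj [Hbj Hj]] [Haj' [Hbj' Hj']].
  apply (proj1 (proj2 le_po)); auto.
Qed.

Lemma modular_of_le :
  (forall a b x j n k c, le a b -> is_lub le a x j -> is_glb le x b n ->
     is_lub le a n k -> le c j -> le c b -> le c k) ->
  modular le.
Proof.
  destruct le_po as [_ [le_antisym le_trans]].
  intros Hmod a b x Hab j m n k Hj [Hmj [Hmb Hm]] Hn Hk.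
  apply le_antisym; [exact (Hmod a b x j n k m Hab Hj Hn Hk Hmj Hmb)|].
  destruct Hj as [Haj [Hxj _]], Hn as [Hnx [Hnb _]], Hk as [_ [_ Hk]].
  apply Hm; apply Hk; eauto.
Qed.

End OrderFacts.

Definition op (S : Type) (mul : S -> S -> S) : S -> S -> S := fun x y => mul y x.

Section Classes.
Variables (S : Type) (mul : S -> S -> S).
Hypothesis Hassoc : associative_op mul.

Local Infix "·" := mul (at level 40, left associativity).

Lemma mul_assoc x y w : x · (y · w) = x · y · w.
Proof. apply Hassoc. Qed.

Ltac assoc := repeat rewrite mul_assoc; reflexivity.

Lemma op_associative : associative_op (op mul).
Proof. intros x y w; unfold op; symmetry; apply Hassoc. Qed.

Lemma omega_l_trans a b c : a · b = a -> b · c = b -> a · c = a.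
Proof. intros Hab Hbc. rewrite <- Hab at 1. rewrite <- mul_assoc, Hbc. exact Hab. Qed.

Lemma regular_idem_l t y : t · y · t = t -> idem mul (y · t).
Proof.
  intro Ht. unfold idem. transitivity (y · (t · y · t)); [assoc|]. rewrite Ht. reflexivity.
Qed.

Lemma regular_idem_r t y : t · y · t = t -> idem mul (t · y).
Proof. intro Ht. unfold idem. rewrite mul_assoc, Ht. reflexivity. Qed.

Lemma regular_le_iff t y e : t · y · t = t -> (t · e = t <-> y · t · e = y · t).
Proof.
  intro Ht. split; intro H.
  - rewrite <- mul_assoc, H. reflexivity.
  - rewrite <- Ht at 1. transitivity (t · (y · t · e)); [assoc|].
    rewrite H, mul_assoc. exact Ht.
Qed.

Lemma regular_mem_iff t s c : t · s · t = t -> (c · (s · t) = c <-> exists r, c = r · t).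
Proof.
  intro Ht. split.
  - intro Hc. exists (c · s). rewrite <- Hc at 1. assoc.
  - intros [r ->]. rewrite <- mul_assoc, (mul_assoc t), Ht. reflexivity.
Qed.

Lemma Lcls_eq e f : Lrel mul e f -> Lcls mul e = Lcls mul f.
Proof.
  intros [Hef Hfe]. extensionality x. apply propositional_extensionality.
  unfold Lcls, Lrel, omega_l in *.
  split; intros [Hx [Hxe Hex]]; repeat split; auto; eapply omega_l_trans; eauto.
Qed.

Definition Lclass e (He : idem mul e) : LE mul :=
  exist _ (Lcls mul e) (ex_intro _ e (conj He eq_refl)).

Lemma LE_ind (P : LE mul -> Prop) :
  (forall e (He : idem mul e), P (Lclass He)) -> forall A, P A.
Proof.
  intros HP [A [e [He HA]]]. subst A.
  replace (ex_intro _ e _) with (ex_intro (fun e' => idem mul e' /\ Lcls mul e = Lcls mul e')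
    e (conj He eq_refl)) by apply proof_irrelevance.
  apply HP.
Qed.

Lemma Lclass_le e f (He : idem mul e) (Hf : idem mul f) :
  LE_le (Lclass He) (Lclass Hf) <-> e · f = e.
Proof.
  unfold LE_le, Lclass, Lcls, Lrel, omega_l; simpl. split.
  - intros [e0 [f0 [[_ [He0e Hee0]] [[_ [Hf0f _]] He0f0]]]].
    apply (omega_l_trans Hee0). apply (omega_l_trans He0f0 Hf0f).
  - intro Hef. exists e, f. repeat split; auto.
Qed.

Lemma Lclass_eq e f (He : idem mul e) (Hf : idem mul f) :
  Lrel mul e f -> Lclass He = Lclass Hf.
Proof. intro Hef. apply subset_eq_compat, Lcls_eq, Hef. Qed.

Lemma LE_partial_order : partial_order (@LE_le S mul).
Proof.
  split; [|split].
  - intro A. induction A as [e He] using LE_ind. apply Lclass_le, He.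
  - intros A B. induction A as [e He] using LE_ind. induction B as [f Hf] using LE_ind.
    rewrite !Lclass_le. intros. apply Lclass_eq. split; assumption.
  - intros A B C. induction A as [e He] using LE_ind. induction B as [f Hf] using LE_ind.
    induction C as [g Hg] using LE_ind.
    rewrite !Lclass_le. apply omega_l_trans.
Qed.

Lemma Lclass_glb_iff e f m (He : idem mul e) (Hf : idem mul f) (Hm : idem mul m) :
  is_glb (@LE_le S mul) (Lclass He) (Lclass Hf) (Lclass Hm) <->
  forall g, idem mul g -> (g · m = g <-> g · e = g /\ g · f = g).
Proof.
  unfold is_glb. rewrite !Lclass_le. split.
  - intros [Hme [Hmf Hglb]] g Hg. split.
    + intro Hgm. split; eapply omega_l_trans; eassumption.
    + intros [Hge Hgf]. apply (Lclass_le Hg Hm), Hglb; apply Lclass_le; assumption.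
  - intro Hglb. split; [|split]; try apply Hglb; auto.
    intro C. induction C as [g Hg] using LE_ind. rewrite !Lclass_le. intros; apply Hglb; auto.
Qed.

Lemma Lclass_lub_iff e f j (He : idem mul e) (Hf : idem mul f) (Hj : idem mul j) :
  is_lub (@LE_le S mul) (Lclass He) (Lclass Hf) (Lclass Hj) <->
  forall g, idem mul g -> (j · g = j <-> e · g = e /\ f · g = f).
Proof.
  unfold is_lub. rewrite !Lclass_le. split.
  - intros [Hej [Hfj Hlub]] g Hg. split.
    + intro Hjg. split; eapply omega_l_trans; eassumption.
    + intros [Heg Hfg]. apply (Lclass_le Hj Hg), Hlub; apply Lclass_le; assumption.
  - intro Hlub. split; [|split]; try apply Hlub; auto.
    intro C. induction C as [g Hg] using LE_ind. rewrite !Lclass_le. intros; apply Hlub; auto.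
Qed.

End Classes.

Section Biordered.
Variables (S : Type) (mul : S -> S -> S).
Hypothesis Hassoc : associative_op mul.
Hypothesis Hreg : regular_semigroup mul.
Variable z : S.
Hypothesis Hz : idem mul z.
Hypothesis HE1 : forall e, idem mul e -> omega mul z e.
Variable prime : S -> S.
Hypothesis Hpr : forall e, idem mul e -> idem mul (prime e).
Hypothesis HE2i : forall e, idem mul e -> prime (prime e) = e.
Hypothesis HE2ii : forall e f, idem mul e -> idem mul f ->
  (omega_l mul f e <-> omega_r mul (prime e) (prime f)).
Hypothesis HE2iii : forall e f, idem mul e -> idem mul f ->
  (omega_l mul f (prime e) <-> (forall g, Mset mul f e g <-> g = z)).

Local Infix "·" := mul (at level 40, left associativity).
Local Notation "e ′" := (prime e) (at level 1, format "e ′").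
Local Notation mul_assoc := (mul_assoc Hassoc).
Ltac assoc := repeat rewrite mul_assoc; reflexivity.

Lemma zero_mul e : idem mul e -> z · e = z.
Proof. intro He. exact (proj1 (HE1 He)). Qed.

Lemma mul_zero e : idem mul e -> e · z = z.
Proof. intro He. exact (proj2 (HE1 He)). Qed.

Lemma mul_zero_of_zero_mul s : z · (s · z) = z -> s · z = z.
Proof.
  intro H. assert (Hsz : idem mul (s · z)).
  { unfold idem. transitivity (s · (z · (s · z))); [assoc|]. rewrite H. reflexivity. }
  transitivity (s · z · z); [rewrite <- mul_assoc, Hz; reflexivity | exact (mul_zero Hsz)].
Qed.

Lemma Mset_zero_iff a b : idem mul a -> idem mul b ->
  ((forall g, Mset mul a b g <-> g = z) <-> a · b = z).
Proof.
  intros Ha Hb. split.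
  - intro HM. destruct (Hreg (a · b)) as [s Hs].
    set (g := b · s · a · (b · s · a)).
    assert (Hg : Mset mul a b g).
    { repeat split; unfold g.
      - transitivity (b · s · (a · b · s · (a · b)) · s · (a · b) · s · a); [assoc|].
        rewrite Hs. transitivity (b · s · (a · b · s · (a · b)) · s · a); [assoc|].
        rewrite Hs. assoc.
      - transitivity (b · s · a · b · s · (a · a)); [assoc|]. rewrite Ha. assoc.
      - transitivity (b · b · s · a · (b · s · a)); [assoc|]. rewrite Hb. assoc. }
    apply HM in Hg.
    transitivity (a · b · s · (a · b) · s · (a · b)); [rewrite !Hs; reflexivity|].
    transitivity (a · g · b); [unfold g; assoc|].
    rewrite Hg, mul_zero, zero_mul; auto.
  - intros Hab g. split.
    + intros [Hg [Hga Hbg]]. unfold omega_l, omega_r in *.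
      transitivity (g · a · (b · g)); [rewrite Hga, Hbg; symmetry; exact Hg|].
      transitivity (g · (a · b) · g); [assoc|].
      rewrite Hab, mul_zero, zero_mul; auto.
    + intros ->. repeat split; [exact Hz | apply zero_mul, Ha | apply mul_zero, Hb].
Qed.

Lemma le_iff_orth a b : idem mul a -> idem mul b -> (a · b = a <-> a · b′ = z).
Proof.
  intros Ha Hb. rewrite <- Mset_zero_iff by auto.
  rewrite <- (HE2iii (Hpr Hb) Ha), HE2i by exact Hb. reflexivity.
Qed.

Lemma mul_prime_self e : idem mul e -> e · e′ = z.
Proof. intro He. apply le_iff_orth; auto. Qed.

Lemma prime_mul_self e : idem mul e -> e′ · e = z.
Proof. intro He. rewrite <- (HE2i He) at 2. apply mul_prime_self, Hpr, He. Qed.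

Lemma prime_antitone a g : idem mul a -> idem mul g -> a · g = a -> a′ · g′ = g′.
Proof. intros Ha Hg. apply (HE2ii Hg Ha). Qed.

Lemma r_le_iff_orth a b : idem mul a -> idem mul b -> (b · a = a <-> b′ · a = z).
Proof.
  intros Ha Hb. transitivity (b′ · a′ = b′).
  - rewrite (HE2ii (Hpr Ha) (Hpr Hb)). unfold omega_r. rewrite !HE2i by assumption. reflexivity.
  - rewrite (le_iff_orth (Hpr Hb) (Hpr Ha)), HE2i by exact Ha. reflexivity.
Qed.

Lemma mul_eq_of_orth t b : idem mul b -> t · b′ = z -> t · b = t.
Proof.
  intros Hb Htb. destruct (Hreg t) as [y Hy].
  assert (Hyt : idem mul (y · t)) by exact (regular_idem_l Hassoc Hy).
  assert (Hytb : y · t · b′ = y · z) by (rewrite <- Htb; assoc).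
  assert (Hyz : y · z = z).
  { apply mul_zero_of_zero_mul. rewrite <- Hytb. transitivity (z · (y · t) · b′); [assoc|].
    rewrite (zero_mul Hyt). apply zero_mul, Hpr, Hb. }
  apply (regular_le_iff Hassoc b Hy), le_iff_orth; auto. congruence.
Qed.

Lemma mul_eq_iff_orth c u : idem mul u -> z · c = z -> (c · u = c <-> c · u′ = z).
Proof.
  intros Hu Hzc. split; [|apply mul_eq_of_orth, Hu].
  intro Hcu. rewrite <- Hcu, <- mul_assoc, mul_prime_self by exact Hu.
  apply mul_zero_of_zero_mul. rewrite mul_assoc, Hzc. exact Hz.
Qed.

Lemma meet_spec e f : idem mul e -> idem mul f ->
  exists m, idem mul m /\ forall g, idem mul g -> (g · m = g <-> g · e = g /\ g · f = g).
Proof.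
  intros He Hf. destruct (Hreg (f · e′)) as [x Hx].
  set (u := f · e′ · x).
  assert (Hu : idem mul u) by exact (regular_idem_r Hassoc Hx).
  assert (Hzx : z · x = z).
  { transitivity (z · u); [|apply zero_mul, Hu].
    unfold u. rewrite !mul_assoc, (zero_mul Hf), (zero_mul (Hpr He)). reflexivity. }
  destruct (Hreg (u′ · f)) as [y Hy].
  set (w := u′ · f) in *.
  assert (Hwe : w · e′ = z).
  { unfold w. rewrite <- mul_assoc, <- Hx. fold u.
    rewrite mul_assoc, (prime_mul_self Hu), !mul_assoc, (zero_mul Hf), (zero_mul (Hpr He)).
    reflexivity. }
  exists (y · w). split; [exact (regular_idem_l Hassoc Hy)|].
  assert (Hme : y · w · e = y · w).
  { apply le_iff_orth; [exact (regular_idem_l Hassoc Hy) | exact He|].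
    rewrite <- mul_assoc, Hwe. apply mul_zero_of_zero_mul.
    transitivity (z · (y · w) · e′); [rewrite <- Hwe at 2; assoc|].
    rewrite (zero_mul (regular_idem_l Hassoc Hy)). apply zero_mul, Hpr, He. }
  assert (Hmf : y · w · f = y · w).
  { unfold w. transitivity (y · (u′ · (f · f))); [assoc|]. rewrite Hf. reflexivity. }
  intros g Hg. split.
  - intro Hgm. split; eapply omega_l_trans; eauto.
  - intros [Hge Hgf].
    assert (Hgu : g · u′ = g).
    { apply le_iff_orth; auto. rewrite HE2i by exact Hu.
      unfold u. rewrite mul_assoc, mul_assoc, Hgf, (proj1 (le_iff_orth Hg He) Hge). exact Hzx. }
    assert (Hgw : g · w = g) by (unfold w; rewrite mul_assoc, Hgu; exact Hgf).
    rewrite <- Hgw at 1. transitivity (g · (w · y · w)); [assoc|]. rewrite Hy. exact Hgw.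
Qed.

Lemma join_spec a x : idem mul a -> idem mul x ->
  exists j, idem mul j /\
    forall c, idem mul c -> (c · j = c <-> exists r, c · a′ = r · (x · a′)).
Proof.
  intros Ha Hx. destruct (Hreg (x · a′)) as [s Hs].
  set (u := s · (x · a′)).
  assert (Hu : idem mul u) by exact (regular_idem_l Hassoc Hs).
  destruct (Hreg (a′ · u′)) as [y Hy].
  set (n := a′ · u′ · y).
  assert (Hn : idem mul n) by exact (regular_idem_r Hassoc Hy).
  assert (Hzy : z · y = z).
  { transitivity (z · n); [|apply zero_mul, Hn].
    unfold n. rewrite !mul_assoc, (zero_mul (Hpr Ha)), (zero_mul (Hpr Hu)). reflexivity. }
  exists n′. split; [apply Hpr, Hn|]. intros c Hc.
  rewrite (le_iff_orth Hc (Hpr Hn)), HE2i by exact Hn.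
  rewrite <- (regular_mem_iff Hassoc (c · a′) Hs). fold u.
  rewrite (mul_eq_iff_orth Hu)
    by (rewrite mul_assoc, (zero_mul Hc), (zero_mul (Hpr Ha)); reflexivity).
  split; intro Hcn.
  - rewrite <- mul_assoc, <- Hy. fold n.
    rewrite mul_assoc, Hcn, mul_assoc, (zero_mul (Hpr Ha)). apply zero_mul, Hpr, Hu.
  - unfold n. rewrite !mul_assoc, Hcn. exact Hzy.
Qed.

Lemma join_lub a x j : idem mul a -> idem mul x -> idem mul j ->
  (forall c, idem mul c -> (c · j = c <-> exists r, c · a′ = r · (x · a′))) ->
  forall g, idem mul g -> (j · g = j <-> a · g = a /\ x · g = x).
Proof.
  intros Ha Hx Hj Hjoin.
  assert (Haj : a · j = a).
  { apply Hjoin; auto. exists z.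
    rewrite (mul_prime_self Ha), mul_assoc, (zero_mul Hx).
    symmetry. apply zero_mul, Hpr, Ha. }
  assert (Hxj : x · j = x) by (apply Hjoin; auto; exists x; rewrite mul_assoc, Hx; reflexivity).
  intros g Hg. split.
  - intro Hjg. split; eapply omega_l_trans; eauto.
  - intros [Hag Hxg]. destruct (proj1 (Hjoin j Hj) Hj) as [r Hr].
    assert (Hjg : j · g′ = r · z).
    { transitivity (j · a′ · g′).
      { rewrite <- mul_assoc, (prime_antitone Ha Hg Hag). reflexivity. }
      rewrite Hr. transitivity (r · (x · (a′ · g′))); [assoc|].
      rewrite (prime_antitone Ha Hg Hag), (proj1 (le_iff_orth Hx Hg) Hxg). reflexivity. }
    apply le_iff_orth; auto. rewrite Hjg. apply mul_zero_of_zero_mul.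
    rewrite <- Hjg, mul_assoc, (zero_mul Hj). apply zero_mul, Hpr, Hg.
Qed.

Lemma join_modular a b x n c :
  idem mul a -> idem mul b -> idem mul x -> idem mul c ->
  (forall g, idem mul g -> (g · n = g <-> g · x = g /\ g · b = g)) ->
  a · b = a -> c · b = c -> (exists r, c · a′ = r · (x · a′)) ->
  exists r, c · a′ = r · (n · a′).
Proof.
  intros Ha Hb Hx Hc Hmeet Hab Hcb [r Hr].
  assert (Hab' := prime_antitone Ha Hb Hab).
  assert (Hrxb : r · x · b′ = z).
  { transitivity (r · (x · a′) · b′); [rewrite <- Hab' at 1; assoc|].
    rewrite <- Hr, <- mul_assoc, Hab'. apply le_iff_orth; auto. }
  assert (Hrxx : r · x · x = r · x) by (rewrite <- mul_assoc, Hx; reflexivity).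
  destruct (Hreg (r · x)) as [v Hv].
  assert (Hrxn : r · x · n = r · x).
  { apply (regular_le_iff Hassoc n Hv), Hmeet; [exact (regular_idem_l Hassoc Hv)|].
    split; apply (regular_le_iff Hassoc _ Hv); [exact Hrxx | exact (mul_eq_of_orth Hb Hrxb)]. }
  exists (r · x). rewrite Hr. transitivity (r · x · n · a′); [rewrite Hrxn|]; assoc.
Qed.

Lemma le_top e : idem mul e -> e · z′ = e.
Proof. intro He. apply le_iff_orth; auto. rewrite HE2i by exact Hz. apply mul_zero, He. Qed.

Lemma LE_lattice : is_lattice (@LE_le S mul).
Proof.
  split; [exact (LE_partial_order Hassoc)|].
  intros A B. induction A as [e He] using LE_ind. induction B as [f Hf] using LE_ind.
  destruct (meet_spec He Hf) as [m [Hm Hmeet]].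
  destruct (join_spec He Hf) as [j [Hj Hjoin]].
  split.
  - exists (Lclass Hm). apply (Lclass_glb_iff Hassoc), Hmeet.
  - exists (Lclass Hj). apply (Lclass_lub_iff Hassoc), join_lub; auto.
Qed.

Lemma LE_modular : modular (@LE_le S mul).
Proof.
  assert (Hpo := LE_partial_order Hassoc).
  apply (modular_of_le Hpo). intros A B X J N K C.
  induction A as [a Ha] using LE_ind. induction B as [b Hb] using LE_ind.
  induction X as [x Hx] using LE_ind. induction N as [n Hn] using LE_ind.
  induction C as [c Hc] using LE_ind.
  destruct (join_spec Ha Hx) as [j [Hj Hjoin]].
  destruct (join_spec Ha Hn) as [k [Hk Hjoin']].
  intros Hab HJ HN HK.
  rewrite (lub_unique Hpo HJ (proj2 (Lclass_lub_iff Hassoc Ha Hx Hj) (join_lub Ha Hx Hj Hjoin))).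
  rewrite (lub_unique Hpo HK (proj2 (Lclass_lub_iff Hassoc Ha Hn Hk) (join_lub Ha Hn Hk Hjoin'))).
  rewrite (Lclass_glb_iff Hassoc) in HN. rewrite !(Lclass_le Hassoc) in *.
  intros Hcj Hcb. apply Hjoin'; auto.
  apply (join_modular Ha Hb Hx Hc HN Hab Hcb), Hjoin; auto.
Qed.

Lemma LE_complemented : complemented (@LE_le S mul).
Proof.
  exists (Lclass Hz), (Lclass (Hpr Hz)). split.
  - intro X. induction X as [e He] using LE_ind. rewrite !(Lclass_le Hassoc).
    split; [apply zero_mul | apply le_top]; exact He.
  - intro A. induction A as [e He] using LE_ind. exists (Lclass (Hpr He)). split.
    + apply (Lclass_glb_iff Hassoc). intros g Hg. split.
      * intro Hgz. rewrite <- Hgz, (mul_zero Hg). split; apply zero_mul; auto.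
      * intros [Hge Hge']. apply le_iff_orth in Hge; auto.
        rewrite Hge' in Hge. rewrite Hge. exact Hz.
    + apply (Lclass_lub_iff Hassoc). intros g Hg. split.
      * intro Hzg. split; [exact (omega_l_trans Hassoc (le_top He) Hzg)|].
        exact (omega_l_trans Hassoc (le_top (Hpr He)) Hzg).
      * intros [Heg He'g].
        assert (Hg' : g′ = z).
        { rewrite <- (prime_antitone He Hg Heg), <- (prime_antitone (Hpr He) Hg He'g).
          rewrite HE2i by exact He.
          rewrite mul_assoc, (prime_mul_self He). apply zero_mul, Hpr, Hg. }
        rewrite <- (HE2i Hg), Hg'. apply Hpr, Hz.
Qed.

Lemma LE_complemented_modular : complemented_modular_lattice (@LE_le S mul).
Proof. split; [exact LE_lattice | split; [exact LE_modular | exact LE_complemented]]. Qed.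

Lemma op_regular : regular_semigroup (op mul).
Proof. intro s. destruct (Hreg s) as [y Hy]. exists y. unfold op. rewrite mul_assoc. exact Hy. Qed.

Lemma op_zero_least e : idem (op mul) e -> omega (op mul) z e.
Proof. intro He. split; [apply mul_zero | apply zero_mul]; exact He. Qed.

Lemma op_prime_antitone e f : idem (op mul) e -> idem (op mul) f ->
  (omega_l (op mul) f e <-> omega_r (op mul) e′ f′).
Proof.
  intros He Hf. unfold omega_l, omega_r, op.
  rewrite (HE2ii (Hpr Hf) (Hpr He)), !HE2i by assumption. reflexivity.
Qed.

Lemma op_prime_orth e f : idem (op mul) e -> idem (op mul) f ->
  (omega_l (op mul) f e′ <-> (forall g, Mset (op mul) f e g <-> g = z)).
Proof.
  intros He Hf. unfold omega_l, op.
  rewrite (r_le_iff_orth Hf (Hpr He)), HE2i, <- Mset_zero_iff by assumption.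
  unfold Mset, omega_l, omega_r. split; intros HM g; rewrite <- HM; tauto.
Qed.

Definition dual_class (A : S -> Prop) : S -> Prop := fun x => idem mul x /\ A x′.

Lemma prime_Lrel_iff x e : idem mul x -> idem mul e -> (Lrel mul x′ e <-> Rrel mul x e′).
Proof.
  intros Hx He. unfold Lrel, Rrel, omega_l.
  rewrite (HE2ii He (Hpr Hx)), (HE2ii (Hpr Hx) He), HE2i by exact Hx. tauto.
Qed.

Lemma dual_Lcls e : idem mul e -> dual_class (Lcls mul e) = Rcls mul e′.
Proof.
  intro He. extensionality x. apply propositional_extensionality.
  unfold dual_class, Lcls, Rcls. split.
  - intros [Hx [_ HL]]. split; [exact Hx|]. apply prime_Lrel_iff; assumption.
  - intros [Hx HR]. split; [exact Hx|]. split; [apply Hpr, Hx|]. apply prime_Lrel_iff; assumption.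
Qed.

Lemma prime_Rrel_iff x e : idem mul x -> idem mul e -> (Rrel mul x′ e <-> Lrel mul x e′).
Proof.
  intros Hx He. pose proof (prime_Lrel_iff (Hpr Hx) (Hpr He)) as H.
  rewrite !HE2i in H by assumption. symmetry. exact H.
Qed.

Lemma dual_Rcls e : idem mul e -> dual_class (Rcls mul e) = Lcls mul e′.
Proof.
  intro He. extensionality x. apply propositional_extensionality.
  unfold dual_class, Lcls, Rcls. split.
  - intros [Hx [_ HR]]. split; [exact Hx|]. apply prime_Rrel_iff; assumption.
  - intros [Hx HL]. split; [exact Hx|]. split; [apply Hpr, Hx|]. apply prime_Rrel_iff; assumption.
Qed.

Lemma dual_class_involutive (A : S -> Prop) :
  (forall x, A x -> idem mul x) -> dual_class (dual_class A) = A.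
Proof.
  intro HA. extensionality x. apply propositional_extensionality.
  unfold dual_class. split.
  - intros [Hx [_ HAx]]. rewrite HE2i in HAx; assumption.
  - intro HAx. assert (Hx := HA x HAx). rewrite HE2i by exact Hx. auto.
Qed.

Lemma dual_class_LE (A : LE mul) :
  exists e, idem mul e /\ dual_class (proj1_sig A) = Rcls mul e.
Proof.
  destruct A as [A [e [He ->]]]. exists e′. split; [apply Hpr, He | apply dual_Lcls, He].
Qed.

Lemma dual_class_RE (B : RE mul) :
  exists e, idem mul e /\ dual_class (proj1_sig B) = Lcls mul e.
Proof.
  destruct B as [B [e [He ->]]]. exists e′. split; [apply Hpr, He | apply dual_Rcls, He].
Qed.

Definition Ldual (A : LE mul) : RE mul := exist _ _ (dual_class_LE A).
Definition Rdual (B : RE mul) : LE mul := exist _ _ (dual_class_RE B).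

Lemma Ldual_Lclass e (He : idem mul e) : Ldual (Lclass He) = Lclass (mul := op mul) (Hpr He).
Proof. apply subset_eq_compat, dual_Lcls, He. Qed.

Lemma LE_RE_dual : dually_isomorphic (@LE_le S mul) (@RE_le S mul).
Proof.
  exists Ldual, Rdual. split; [|split].
  - intros [A [e [He ->]]]. apply subset_eq_compat, dual_class_involutive.
    intros x [Hx _]. exact Hx.
  - intros [B [e [He ->]]]. apply subset_eq_compat, dual_class_involutive.
    intros x [Hx _]. exact Hx.
  - intros A B. induction A as [e He] using LE_ind. induction B as [f Hf] using LE_ind.
    rewrite !Ldual_Lclass, (Lclass_le Hassoc).
    exact (iff_trans (HE2ii Hf He) (iff_sym (Lclass_le (op_associative Hassoc) (Hpr Hf) (Hpr He)))).
Qed.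

End Biordered.

Theorem corollary3p4 (S : Type) (mul : S -> S -> S)
  (Hassoc : associative_op mul) (Hreg : regular_semigroup mul)
  (z : S) (Hz : idem mul z) (HE1 : forall e, idem mul e -> omega mul z e)
  (prime : S -> S) (Hpr : forall e, idem mul e -> idem mul (prime e))
  (HE2i : forall e, idem mul e -> prime (prime e) = e)
  (HE2ii : forall e f, idem mul e -> idem mul f ->
             (omega_l mul f e <-> omega_r mul (prime e) (prime f)))
  (HE2iii : forall e f, idem mul e -> idem mul f ->
             (omega_l mul f (prime e) <->
              (forall g, Mset mul f e g <-> g = z))) :
  complemented_modular_lattice (@LE_le S mul) /\
  complemented_modular_lattice (@RE_le S mul) /\
  dually_isomorphic (@LE_le S mul) (@RE_le S mul).
Proof.
  split; [|split].
  - exact (LE_complemented_modular Hassoc Hreg Hz HE1 Hpr HE2i HE2ii HE2iii).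
  - exact (LE_complemented_modular (op_associative Hassoc) (op_regular Hassoc Hreg) Hz
             (op_zero_least HE1) Hpr HE2i (op_prime_antitone Hpr HE2i HE2ii)
             (op_prime_orth Hassoc Hreg Hz HE1 Hpr HE2i HE2ii HE2iii)).
  - exact (LE_RE_dual Hassoc Hpr HE2i HE2ii).
Qed.
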